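(* Let $x$ be a real number with $0<x\le 1$. For every integer $k\ge 1$, $$B_{k}(1-x)=(-1)^{k+1}\sum_{n=1}^{k}\left(\frac{1}{n(n+1)}+\frac{x-1}{n^2}\right)\Delta_{n,x}(k),\qquad\text{where}\quad \Delta_{n,x}(k)=\sum_{j=1}^{n}(-1)^{j}\binom{n}{j}\,j\,(j+x-1)^{k-1}.$$
   Context: The Bernoulli polynomials $B_k(x)$ are defined by the generating function $\frac{te^{xt}}{e^{t}-1}=\sum_{k=0}^{\infty}\frac{B_k(x)}{k!}t^k$ for $|t|<2\pi$. Here $0^0$ is interpreted as $1$. *)

From Stdlib Require Import Reals Lra.
From Coquelicot Require Import Coquelicot.
Open Scope R_scope.

Definition bern_gen (x t : R) : R :=
  if Req_EM_T t 0 then 1 else t * exp (x * t) / (exp t - 1).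

(* B_k(x) = k! [t^k] (t e^{xt}/(e^t-1)) = k-th derivative at t = 0 of the
   generating function (the Taylor coefficient times k!). *)
Definition bernoulli_poly (k : nat) (x : R) : R :=
  Derive_n (bern_gen x) k 0.

Definition bern_Delta (n : nat) (x : R) (k : nat) : R :=
  sum_n_m (fun j => (-1) ^ j * Binomial.C n j * INR j * (INR j + x - 1) ^ (k - 1)) 1 n.

(* With [u = 1 - exp (- t)], the generating function of [B_k (1 - x)] is
   [exp (- x t) * t / u], and [t = - ln (1 - u) = sum_(n >= 0) u^(n+1) / (n+1)].
   Cutting this series after [u^(k+1)] changes the generating function only at
   orders above [k], so [B_k (1 - x)] is the [k]-th derivative at [0] of
   [exp (- x t) * sum_(n <= k) u^n / (n+1)].  One differentiation turns this into
   [sum_(n < k) c_n exp (- x t) u^n] plus a multiple of [exp (- x t) u^k], which is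
   flat to order [k]; the binomial expansion
   [exp (- x t) u^n = sum_j (-1)^j C(n,j) exp (- (x+j) t)] then turns the remaining
   [(k-1)]-st derivatives at [0] into the sums [Delta_(n+1,x)(k)]. *)

From Stdlib Require Import Reals Lra Lia FunctionalExtensionality.
From Coquelicot Require Import Coquelicot.
Open Scope R_scope.

Fixpoint Cn (n : nat) (f : R -> R) : Prop :=
  match n with
  | O => True
  | S m => (forall x, ex_derive f x) /\ Cn m (Derive f)
  end.

Definition smooth (f : R -> R) : Prop := forall n, Cn n f.

Lemma smooth_ex_derive f x : smooth f -> ex_derive f x.
Proof. intros Hf; exact (proj1 (Hf 1%nat) x). Qed.

Lemma smooth_Derive f : smooth f -> smooth (Derive f).
Proof. intros Hf n; exact (proj2 (Hf (S n))). Qed.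

Lemma Cn_S_Cn n f : Cn (S n) f -> Cn n f.
Proof.
  revert f; induction n as [|n IH]; intros f Hf; simpl in *; auto.
  destruct Hf as [Hf1 [Hf2 Hf3]]; split; auto.
Qed.

Lemma Cn_plus n : forall f g, Cn n f -> Cn n g -> Cn n (fun x => f x + g x).
Proof.
  induction n as [|n IH]; intros f g Hf Hg; simpl in *; auto.
  destruct Hf as [Hf1 Hf2], Hg as [Hg1 Hg2]; split.
  - intros x; apply (ex_derive_plus f g); auto.
  - replace (Derive (fun x => f x + g x)) with (fun x => Derive f x + Derive g x); auto.
    apply functional_extensionality; intros x; now rewrite Derive_plus.
Qed.

Lemma Cn_mult n : forall f g, Cn n f -> Cn n g -> Cn n (fun x => f x * g x).
Proof.
  induction n as [|n IH]; intros f g Hf Hg; simpl; auto.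
  pose proof (Cn_S_Cn _ _ Hf) as Hf'; pose proof (Cn_S_Cn _ _ Hg) as Hg'.
  destruct Hf as [Hf1 Hf2], Hg as [Hg1 Hg2]; split.
  - intros x; apply ex_derive_mult; auto.
  - replace (Derive (fun x => f x * g x))
      with (fun x => Derive f x * g x + f x * Derive g x).
    + apply Cn_plus; apply IH; auto.
    + apply functional_extensionality; intros x; now rewrite Derive_mult.
Qed.

Lemma smooth_const c : smooth (fun _ => c).
Proof.
  intros n; revert c; induction n as [|n IH]; intros c; simpl; auto; split.
  - intros x; apply ex_derive_const.
  - replace (Derive (fun _ => c)) with (fun _ : R => 0); auto.
    apply functional_extensionality; intros x; now rewrite Derive_const.
Qed.

Lemma smooth_plus f g : smooth f -> smooth g -> smooth (fun x => f x + g x).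
Proof. intros Hf Hg n; apply Cn_plus; auto. Qed.

Lemma smooth_mult f g : smooth f -> smooth g -> smooth (fun x => f x * g x).
Proof. intros Hf Hg n; apply Cn_mult; auto. Qed.

Lemma smooth_scal c f : smooth f -> smooth (fun x => c * f x).
Proof. intros Hf; apply smooth_mult; [apply smooth_const | exact Hf]. Qed.

Lemma smooth_minus f g : smooth f -> smooth g -> smooth (fun x => f x - g x).
Proof.
  intros Hf Hg.
  replace (fun x => f x - g x) with (fun x => f x + (-1) * g x)
    by (apply functional_extensionality; intros x; ring).
  apply smooth_plus, smooth_scal; auto.
Qed.

Lemma smooth_pow f m : smooth f -> smooth (fun x => f x ^ m).
Proof.
  intros Hf; induction m as [|m IH]; simpl.
  - apply smooth_const.
  - apply smooth_mult; auto.
Qed.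

Lemma smooth_sum (F : nat -> R -> R) m :
  (forall i, smooth (F i)) -> smooth (fun x => sum_f_R0 (fun i => F i x) m).
Proof. intros HF; induction m as [|m IH]; simpl; auto; apply smooth_plus; auto. Qed.

Lemma smooth_id : smooth (fun x => x).
Proof.
  intros [|n]; simpl; auto; split.
  - intros x; apply ex_derive_id.
  - replace (Derive (fun x => x)) with (fun _ : R => 1); [apply smooth_const|].
    apply functional_extensionality; intros x; now rewrite Derive_id.
Qed.

Lemma smooth_exp_scal c : smooth (fun x => exp (c * x)).
Proof.
  intros n; revert c; induction n as [|n IH]; intros c; simpl; auto.
  assert (D : forall x, is_derive (fun x => exp (c * x)) x (c * exp (c * x)))
    by (intros x; auto_derive; auto; ring).
  split.
  - intros x; eexists; apply D.
  - replace (Derive (fun x => exp (c * x))) with (fun x => c * exp (c * x)).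
    + apply (Cn_mult n (fun _ => c)); [apply smooth_const | apply IH].
    + apply functional_extensionality; intros x; symmetry; apply is_derive_unique, D.
Qed.

Lemma smooth_inv f : smooth f -> (forall x, f x <> 0) -> smooth (fun x => / f x).
Proof.
  intros Hf Hnz n; induction n as [|n IH]; simpl; auto; split.
  - intros x; apply ex_derive_inv; auto; apply smooth_ex_derive; auto.
  - replace (Derive (fun x => / f x))
      with (fun x => (-1) * Derive f x * (/ f x * / f x)).
    + apply Cn_mult; [apply smooth_scal, smooth_Derive; auto | apply Cn_mult; exact IH].
    + apply functional_extensionality; intros x.
      rewrite Derive_inv; auto; [field; auto | apply smooth_ex_derive; auto].
Qed.

Lemma smooth_PSeries a : CV_radius a = p_infty -> smooth (PSeries a).
Proof.
  intros Ha n; revert a Ha; induction n as [|n IH]; intros a Ha; simpl; auto.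
  assert (Hin : forall x, Rbar_lt (Rabs x) (CV_radius a)) by (intros x; rewrite Ha; simpl; auto).
  split.
  - intros x; apply ex_derive_PSeries, Hin.
  - replace (Derive (PSeries a)) with (PSeries (PS_derive a)).
    + apply IH; rewrite CV_radius_derive; auto.
    + apply functional_extensionality; intros x; rewrite Derive_PSeries; auto.
Qed.

Lemma Derive_n_S_Derive f n x : Derive_n f (S n) x = Derive_n (Derive f) n x.
Proof. replace (S n) with (n + 1)%nat by lia; now rewrite <- Derive_n_comp. Qed.

Lemma smooth_Derive_n f n : smooth f -> smooth (Derive_n f n).
Proof.
  revert f; induction n as [|n IH]; intros f Hf; [exact Hf|].
  replace (Derive_n f (S n)) with (Derive_n (Derive f) n).
  - apply IH, smooth_Derive; auto.
  - apply functional_extensionality; intros x; now rewrite Derive_n_S_Derive.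
Qed.

Lemma Derive_n_plus_smooth n : forall f g x, smooth f -> smooth g ->
  Derive_n (fun t => f t + g t) n x = Derive_n f n x + Derive_n g n x.
Proof.
  induction n as [|n IH]; intros f g x Hf Hg; [reflexivity|].
  rewrite !Derive_n_S_Derive.
  replace (Derive (fun t => f t + g t)) with (fun t => Derive f t + Derive g t).
  - apply IH; apply smooth_Derive; auto.
  - apply functional_extensionality; intros t.
    rewrite Derive_plus; auto; apply smooth_ex_derive; auto.
Qed.

Lemma Derive_n_sum_smooth n (F : nat -> R -> R) m x : (forall i, smooth (F i)) ->
  Derive_n (fun t => sum_f_R0 (fun i => F i t) m) n x
  = sum_f_R0 (fun i => Derive_n (F i) n x) m.
Proof.
  intros HF; induction m as [|m IH]; simpl; [reflexivity|].
  rewrite Derive_n_plus_smooth, IH; auto; apply smooth_sum; auto.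
Qed.

Lemma Derive_n_exp_scal n : forall c x,
  Derive_n (fun t => exp (c * t)) n x = c ^ n * exp (c * x).
Proof.
  induction n as [|n IH]; intros c x; [simpl; ring|].
  rewrite Derive_n_S_Derive.
  replace (Derive (fun t => exp (c * t))) with (fun t => c * exp (c * t)).
  - rewrite Derive_n_scal_l, IH; simpl; ring.
  - apply functional_extensionality; intros t; symmetry.
    apply is_derive_unique; auto_derive; auto; ring.
Qed.

Lemma Derive_n_mult_id f n x : smooth f ->
  Derive_n (fun t => t * f t) (S n) x = INR (S n) * Derive_n f n x + x * Derive_n f (S n) x.
Proof.
  intros Hf; revert x; induction n as [|n IH]; intros x.
  - simpl; rewrite Derive_mult, Derive_id; [reflexivity | apply ex_derive_id | apply smooth_ex_derive; auto].
  - change (Derive_n (fun t => t * f t) (S (S n)) x)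
      with (Derive (Derive_n (fun t => t * f t) (S n)) x).
    rewrite (Derive_ext _ _ _ IH).
    assert (E0 : forall y, ex_derive (Derive_n f n) y)
      by (intros y; apply smooth_ex_derive, smooth_Derive_n; auto).
    assert (E1 : forall y, ex_derive (Derive_n f (S n)) y)
      by (intros y; apply smooth_ex_derive, smooth_Derive_n; auto).
    rewrite Derive_plus, Derive_scal, Derive_mult, Derive_id; auto.
    + change (Derive (Derive_n f n) x) with (Derive_n f (S n) x).
      change (Derive (Derive_n f (S n)) x) with (Derive_n f (S (S n)) x).
      rewrite !S_INR; ring.
    + apply ex_derive_id.
    + apply ex_derive_scal; auto.
    + apply ex_derive_mult; auto; apply ex_derive_id.
Qed.
Lemma is_derive_Rminus f g x df dg :
  is_derive f x df -> is_derive g x dg -> is_derive (fun t => f t - g t) x (df - dg).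
Proof. exact (is_derive_minus f g x df dg). Qed.
Lemma is_derive_Rplus f g x df dg :
  is_derive f x df -> is_derive g x dg -> is_derive (fun t => f t + g t) x (df + dg).
Proof. exact (is_derive_plus f g x df dg). Qed.
Lemma is_derive_Rmult f g x df dg :
  is_derive f x df -> is_derive g x dg -> is_derive (fun t => f t * g t) x (df * g x + f x * dg).
Proof. intros Hf Hg; apply (is_derive_mult f g); auto; intros; apply Rmult_comm. Qed.

Definition flat (N : nat) (f : R -> R) : Prop :=
  forall j, (j < N)%nat -> Derive_n f j 0 = 0.

Lemma flatS N f : flat (S N) f <-> f 0 = 0 /\ flat N (Derive f).
Proof.
  split.
  - intros Hf; split; [apply (Hf 0%nat); lia|].
    intros j Hj; rewrite <- Derive_n_S_Derive; apply Hf; lia.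
  - intros [H0 Hf] [|j] Hj; [exact H0|].
    rewrite Derive_n_S_Derive; apply Hf; lia.
Qed.

Lemma flat_S_flat N f : flat (S N) f -> flat N f.
Proof. intros Hf j Hj; apply Hf; lia. Qed.

Lemma flat_plus N f g : smooth f -> smooth g -> flat N f -> flat N g ->
  flat N (fun t => f t + g t).
Proof.
  intros Hf Hg Hf0 Hg0 j Hj.
  rewrite Derive_n_plus_smooth, Hf0, Hg0; auto; ring.
Qed.

Lemma flat_mult_r N : forall f g, smooth f -> smooth g -> flat N f ->
  flat N (fun t => f t * g t).
Proof.
  induction N as [|N IH]; intros f g Hf Hg Hf0; [intros j Hj; lia|].
  apply flatS in Hf0 as [Hf00 Hf1]; apply flatS; split.
  - rewrite Hf00; ring.
  - replace (Derive (fun t => f t * g t))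
      with (fun t => Derive f t * g t + f t * Derive g t).
    + assert (Hf' := smooth_Derive f Hf); assert (Hg' := smooth_Derive g Hg).
      apply flat_plus; try apply smooth_mult; auto.
      apply IH; auto; apply flat_S_flat, flatS; auto.
    + apply functional_extensionality; intros t.
      rewrite Derive_mult; auto; apply smooth_ex_derive; auto.
Qed.

Lemma flat_mult_l N f g : smooth f -> smooth g -> flat N g ->
  flat N (fun t => f t * g t).
Proof.
  intros Hf Hg Hg0.
  replace (fun t => f t * g t) with (fun t => g t * f t)
    by (apply functional_extensionality; intros t; ring).
  apply flat_mult_r; auto.
Qed.

Lemma flat_pow N v : smooth v -> v 0 = 0 -> flat N (fun t => v t ^ N).
Proof.
  intros Hv Hv0; induction N as [|N IH]; [intros j Hj; lia|].
  apply flatS; split; [simpl; rewrite Hv0; ring|].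
  replace (Derive (fun t => v t ^ S N)) with (fun t => INR (S N) * Derive v t * v t ^ N).
  - apply flat_mult_l; auto; [apply smooth_scal, smooth_Derive | apply smooth_pow]; auto.
  - apply functional_extensionality; intros t.
    rewrite Derive_pow; [reflexivity | apply smooth_ex_derive; auto].
Qed.

Lemma flat_of_flat_mult_id N f : smooth f -> flat (S N) (fun t => t * f t) -> flat N f.
Proof.
  intros Hf Hf0 j Hj.
  assert (H := Hf0 (S j) ltac:(lia)).
  rewrite Derive_n_mult_id, Rmult_0_l, Rplus_0_r in H; auto.
  apply Rmult_integral in H as [H|H]; auto.
  exfalso; apply (not_0_INR (S j)); auto.
Qed.

Definition exp_coef (n : nat) : R := / INR (Factorial.fact n).

(* [exp_dq t = (exp t - 1) / t], extended by [1] at [0]. *)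
Definition exp_dq : R -> R := PSeries (PS_decr_1 exp_coef).

Lemma CV_radius_exp_coef : CV_radius exp_coef = p_infty.
Proof.
  apply CV_radius_infinite_DAlembert.
  - intros n; apply Rinv_neq_0_compat, INR_fact_neq_0.
  - apply is_lim_seq_ext with (fun n => / INR (S n)).
    + intros n; unfold exp_coef.
      change (Factorial.fact (S n)) with (S n * Factorial.fact n)%nat.
      rewrite mult_INR.
      assert (Hf := INR_fact_neq_0 n); assert (Hn := lt_0_INR (S n) ltac:(lia)).
      rewrite Rabs_pos_eq; [field; lra|].
      replace (/ (INR (S n) * INR (Factorial.fact n)) / / INR (Factorial.fact n))
        with (/ INR (S n)) by (field; lra).
      left; apply Rinv_0_lt_compat; exact Hn.
    + replace (Finite 0) with (Rbar_inv p_infty) by reflexivity.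
      apply is_lim_seq_inv; [|discriminate].
      apply (is_lim_seq_incr_1 INR p_infty), is_lim_seq_INR.
Qed.

Lemma smooth_exp_dq : smooth exp_dq.
Proof. apply smooth_PSeries; rewrite CV_radius_decr_1; apply CV_radius_exp_coef. Qed.

Lemma exp_exp_dq t : exp t = 1 + t * exp_dq t.
Proof.
  rewrite exp_Reals; fold exp_coef; rewrite PSeries_decr_1.
  - unfold exp_coef at 1; simpl; unfold exp_dq; field.
  - apply CV_radius_inside; rewrite CV_radius_exp_coef; simpl; auto.
Qed.

Lemma exp_dq_0 : exp_dq 0 = 1.
Proof. unfold exp_dq; rewrite PSeries_0; unfold PS_decr_1, exp_coef; simpl; field. Qed.

Lemma exp_dq_pos t : 0 < exp_dq t.
Proof.
  destruct (Req_dec t 0) as [->|Ht]; [rewrite exp_dq_0; lra|].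
  assert (E := exp_exp_dq t).
  destruct (Rlt_or_le 0 t) as [Hp|Hn].
  - assert (1 + t < exp t) by (apply exp_ineq1; auto); nra.
  - assert (exp t < exp 0) by (apply exp_increasing; lra); rewrite exp_0 in *; nra.
Qed.

Definition u_exp (t : R) : R := 1 - exp (- t).
Definition u_exp_dq (t : R) : R := exp (- t) * exp_dq t.
Definition damp (x t : R) : R := exp (- x * t).

Lemma smooth_exp_opp : smooth (fun t => exp (- t)).
Proof.
  replace (fun t => exp (- t)) with (fun t => exp ((-1) * t));
    [apply smooth_exp_scal | apply functional_extensionality; intros t; f_equal; ring].
Qed.

Lemma smooth_u_exp : smooth u_exp.
Proof. apply smooth_minus; [apply smooth_const | apply smooth_exp_opp]. Qed.

Lemma smooth_u_exp_dq : smooth u_exp_dq.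
Proof. apply smooth_mult; [apply smooth_exp_opp | apply smooth_exp_dq]. Qed.

Lemma smooth_damp x : smooth (damp x).
Proof. apply smooth_exp_scal. Qed.

Lemma u_exp_0 : u_exp 0 = 0.
Proof. unfold u_exp; rewrite Ropp_0, exp_0; ring. Qed.

Lemma u_exp_eq t : u_exp t = t * u_exp_dq t.
Proof.
  unfold u_exp, u_exp_dq.
  assert (E : exp (- t) * (1 + t * exp_dq t) = 1)
    by (rewrite <- exp_exp_dq, <- exp_plus, Rplus_opp_l; apply exp_0).
  transitivity (exp (- t) * (1 + t * exp_dq t) - exp (- t)); [rewrite E | ]; ring.
Qed.

Lemma u_exp_dq_neq0 t : u_exp_dq t <> 0.
Proof. apply Rgt_not_eq, Rmult_lt_0_compat; [apply exp_pos | apply exp_dq_pos]. Qed.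

Lemma is_derive_u_exp t : is_derive u_exp t (1 - u_exp t).
Proof. unfold u_exp; auto_derive; auto; ring. Qed.

Lemma is_derive_damp x t : is_derive (damp x) t (- x * damp x t).
Proof. unfold damp; auto_derive; auto; ring. Qed.

Lemma bern_gen_eq x t : bern_gen (1 - x) t = damp x t / u_exp_dq t.
Proof.
  unfold bern_gen, damp, u_exp_dq.
  assert (Hq := exp_dq_pos t); assert (He := exp_pos (- t)).
  destruct (Req_EM_T t 0) as [->|Ht].
  - rewrite exp_dq_0, Rmult_0_r, Ropp_0, exp_0; field.
  - rewrite (exp_exp_dq t); replace (1 + t * exp_dq t - 1) with (t * exp_dq t) by ring.
    replace (exp ((1 - x) * t)) with (exp (- x * t) / exp (- t))
      by (unfold Rdiv; rewrite <- exp_Ropp, <- exp_plus; f_equal; ring).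
    field; repeat split; auto; lra.
Qed.

Lemma smooth_bern_gen x : smooth (bern_gen (1 - x)).
Proof.
  replace (bern_gen (1 - x)) with (fun t => damp x t * / u_exp_dq t)
    by (apply functional_extensionality; intros t; now rewrite bern_gen_eq).
  apply smooth_mult; [apply smooth_damp |].
  apply smooth_inv; [apply smooth_u_exp_dq | apply u_exp_dq_neq0].
Qed.

Definition log_partial (k : nat) (t : R) : R :=
  sum_f_R0 (fun n => u_exp t ^ n / INR (S n)) k.

Definition log_rem (k : nat) (t : R) : R := t - u_exp t * log_partial k t.

Lemma smooth_log_partial k : smooth (log_partial k).
Proof.
  apply (smooth_sum (fun n t => u_exp t ^ n / INR (S n))); intros n.
  apply (smooth_mult (fun t => u_exp t ^ n) (fun _ => / INR (S n)));
    [apply smooth_pow, smooth_u_exp | apply smooth_const].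
Qed.

Lemma smooth_log_rem k : smooth (log_rem k).
Proof.
  apply smooth_minus; [apply smooth_id |].
  apply smooth_mult; [apply smooth_u_exp | apply smooth_log_partial].
Qed.

Lemma log_rem_S k t :
  log_rem (S k) t = log_rem k t - / INR (S (S k)) * u_exp t ^ S (S k).
Proof. unfold log_rem, log_partial; rewrite tech5, <- (tech_pow_Rmult _ (S k)).
  unfold Rdiv; ring.
Qed.

Lemma is_derive_log_rem k t : is_derive (log_rem k) t (u_exp t ^ S k).
Proof.
  induction k as [|k IH].
  - unfold log_rem, log_partial, u_exp; simpl; auto_derive; auto; field.
  - apply is_derive_ext with (fun t => log_rem k t - / INR (S (S k)) * u_exp t ^ S (S k));
      [intros s; symmetry; apply log_rem_S|].
    replace (u_exp t ^ S (S k))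
      with (u_exp t ^ S k - / INR (S (S k)) * (INR (S (S k)) * (1 - u_exp t) * u_exp t ^ S k))
      by (rewrite <- (tech_pow_Rmult _ (S k)); field; apply not_0_INR; lia).
    apply is_derive_Rminus; [exact IH|].
    apply is_derive_scal, is_derive_pow, is_derive_u_exp.
Qed.

Lemma flat_log_rem k : flat (S (S k)) (log_rem k).
Proof.
  apply flatS; split; [unfold log_rem; rewrite u_exp_0; ring|].
  replace (Derive (log_rem k)) with (fun t => u_exp t ^ S k).
  - apply flat_pow; [apply smooth_u_exp | apply u_exp_0].
  - apply functional_extensionality; intros t; symmetry; apply is_derive_unique, is_derive_log_rem.
Qed.

(* Multiplied by [u_exp t = t * u_exp_dq t], the error becomes [damp x t * log_rem k t],
   flat to order [k+2]; dividing out [t] and the nonvanishing [u_exp_dq] loses one order. *)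
Lemma flat_bern_gen_sub x k :
  flat (S k) (fun t => bern_gen (1 - x) t - damp x t * log_partial k t).
Proof.
  set (E t := bern_gen (1 - x) t - damp x t * log_partial k t).
  assert (SE : smooth E).
  { apply smooth_minus; [apply smooth_bern_gen |].
    apply smooth_mult; [apply smooth_damp | apply smooth_log_partial]. }
  assert (SEq : smooth (fun t => E t * u_exp_dq t)) by (apply smooth_mult; [exact SE | apply smooth_u_exp_dq]).
  assert (HEq : flat (S k) (fun t => E t * u_exp_dq t)).
  { apply flat_of_flat_mult_id; [exact SEq|].
    replace (fun t => t * (E t * u_exp_dq t)) with (fun t => damp x t * log_rem k t).
    - apply flat_mult_l; [apply smooth_damp | apply smooth_log_rem | apply flat_log_rem].
    - apply functional_extensionality; intros t.
      unfold E, log_rem; rewrite bern_gen_eq.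
      assert (Hq := u_exp_dq_neq0 t); rewrite u_exp_eq; field; exact Hq. }
  replace E with (fun t => E t * u_exp_dq t * / u_exp_dq t)
    by (apply functional_extensionality; intros t; field; apply u_exp_dq_neq0).
  apply flat_mult_r; [exact SEq | | exact HEq].
  apply smooth_inv; [apply smooth_u_exp_dq | apply u_exp_dq_neq0].
Qed.

Lemma bernoulli_poly_trunc x k :
  bernoulli_poly k (1 - x) = Derive_n (fun t => damp x t * log_partial k t) k 0.
Proof.
  unfold bernoulli_poly.
  replace (bern_gen (1 - x)) with (fun t => (bern_gen (1 - x) t - damp x t * log_partial k t)
                                           + damp x t * log_partial k t)
    by (apply functional_extensionality; intros t; ring).
  rewrite Derive_n_plus_smooth, (flat_bern_gen_sub x k k); [ring | lia | |].
  - apply smooth_minus; [apply smooth_bern_gen |].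
    apply smooth_mult; [apply smooth_damp | apply smooth_log_partial].
  - apply smooth_mult; [apply smooth_damp | apply smooth_log_partial].
Qed.

(* The derivative of [damp x * u_exp^n / (n+1)] involves only [u_exp^(n-1)] and [u_exp^n],
   so [u_exp^n] collects [(n+1)/(n+2) - (x+n)/(n+1)] from two neighbouring terms. *)
Definition tele_coef (x : R) (n : nat) : R :=
  1 / (INR (S n) * INR (S (S n))) - x / INR (S n).

Lemma log_partial_S k t :
  log_partial (S k) t = log_partial k t + / INR (S (S k)) * u_exp t ^ S k.
Proof. unfold log_partial; rewrite tech5; unfold Rdiv; ring. Qed.

Lemma is_derive_damp_u_exp_pow x n t :
  is_derive (fun t => damp x t * u_exp t ^ S n) t
    (INR (S n) * (damp x t * u_exp t ^ n) - (x + INR (S n)) * (damp x t * u_exp t ^ S n)).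
Proof.
  assert (H := is_derive_Rmult _ _ t _ _ (is_derive_damp x t)
                 (is_derive_pow _ (S n) t _ (is_derive_u_exp t))).
  simpl pred in H.
  replace (INR (S n) * (damp x t * u_exp t ^ n) - (x + INR (S n)) * (damp x t * u_exp t ^ S n))
    with (- x * damp x t * u_exp t ^ S n + damp x t * (INR (S n) * (1 - u_exp t) * u_exp t ^ n));
    [exact H | rewrite <- (tech_pow_Rmult _ n); ring].
Qed.

Lemma is_derive_damp_log_partial x k t :
  is_derive (fun t => damp x t * log_partial k t) t
    (sum_f_R0 (fun n => tele_coef x n * (damp x t * u_exp t ^ n)) k
     - INR (S k) / INR (S (S k)) * (damp x t * u_exp t ^ k)).
Proof.
  induction k as [|k IH].
  - apply is_derive_ext with (damp x);
      [intros s; unfold log_partial; simpl; field|].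
    replace (sum_f_R0 _ 0 - _) with (- x * damp x t)
      by (unfold tele_coef; simpl; field).
    apply is_derive_damp.
  - apply is_derive_ext with
      (fun t => damp x t * log_partial k t + / INR (S (S k)) * (damp x t * u_exp t ^ S k));
      [intros s; rewrite log_partial_S; simpl; ring|].
    replace (sum_f_R0 _ (S k) - _) with
      (sum_f_R0 (fun n => tele_coef x n * (damp x t * u_exp t ^ n)) k
       - INR (S k) / INR (S (S k)) * (damp x t * u_exp t ^ k)
       + / INR (S (S k)) * (INR (S k) * (damp x t * u_exp t ^ k)
                            - (x + INR (S k)) * (damp x t * u_exp t ^ S k))).
    + apply is_derive_Rplus; [exact IH|].
      apply is_derive_scal, is_derive_damp_u_exp_pow.
    + rewrite tech5; unfold tele_coef; rewrite !S_INR.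
      assert (0 <= INR k) by apply pos_INR.
      field; lra.
Qed.

Lemma pow_exp a n : exp a ^ n = exp (INR n * a).
Proof.
  induction n as [|n IH]; [simpl; now rewrite Rmult_0_l, exp_0|].
  rewrite <- tech_pow_Rmult, IH, <- exp_plus, S_INR; f_equal; ring.
Qed.

Lemma damp_u_exp_pow_expand x n t : damp x t * u_exp t ^ n =
  sum_f_R0 (fun i => Binomial.C n i * (-1) ^ i * exp (- (x + INR i) * t)) n.
Proof.
  unfold u_exp, damp; replace (1 - exp (- t)) with ((-1) * exp (- t) + 1) by ring.
  rewrite binomial, scal_sum; apply sum_eq; intros i _.
  rewrite pow1, Rpow_mult_distr, pow_exp.
  replace (- (x + INR i) * t) with (- x * t + INR i * - t) by ring.
  rewrite exp_plus; ring.
Qed.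

Lemma Derive_n_damp_u_exp_pow x n m :
  Derive_n (fun t => damp x t * u_exp t ^ n) m 0 =
  (-1) ^ m * sum_f_R0 (fun i => Binomial.C n i * (-1) ^ i * (x + INR i) ^ m) n.
Proof.
  replace (fun t => damp x t * u_exp t ^ n) with
    (fun t => sum_f_R0 (fun i => Binomial.C n i * (-1) ^ i * exp (- (x + INR i) * t)) n)
    by (apply functional_extensionality; intros t; now rewrite damp_u_exp_pow_expand).
  rewrite (Derive_n_sum_smooth m (fun i t => Binomial.C n i * (-1) ^ i * exp (- (x + INR i) * t)));
    [|intros i; apply smooth_scal, smooth_exp_scal].
  rewrite scal_sum; apply sum_eq; intros i _.
  rewrite Derive_n_scal_l, Derive_n_exp_scal, Rmult_0_r, exp_0.
  replace (- (x + INR i)) with ((-1) * (x + INR i)) by ring.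
  rewrite Rpow_mult_distr; ring.
Qed.

Lemma flat_damp_u_exp_pow x n : flat n (fun t => damp x t * u_exp t ^ n).
Proof.
  apply flat_mult_l; [apply smooth_damp | apply smooth_pow, smooth_u_exp |].
  apply flat_pow; [apply smooth_u_exp | apply u_exp_0].
Qed.

Lemma bernoulli_poly_S x m : bernoulli_poly (S m) (1 - x) =
  sum_f_R0 (fun n => tele_coef x n * Derive_n (fun t => damp x t * u_exp t ^ n) m 0) m.
Proof.
  assert (Sdu : forall n, smooth (fun t => damp x t * u_exp t ^ n))
    by (intros n; apply smooth_mult; [apply smooth_damp | apply smooth_pow, smooth_u_exp]).
  set (a := tele_coef x (S m) - INR (S (S m)) / INR (S (S (S m)))).
  rewrite bernoulli_poly_trunc, Derive_n_S_Derive.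
  replace (Derive (fun t => damp x t * log_partial (S m) t)) with
    (fun t => sum_f_R0 (fun n => tele_coef x n * (damp x t * u_exp t ^ n)) m
              + a * (damp x t * u_exp t ^ S m)).
  - rewrite Derive_n_plus_smooth, Derive_n_sum_smooth, Derive_n_scal_l.
    + rewrite (flat_damp_u_exp_pow x (S m) m), Rmult_0_r, Rplus_0_r; [|lia].
      apply sum_eq; intros n _; apply Derive_n_scal_l.
    + intros n; apply smooth_scal, Sdu.
    + apply (smooth_sum (fun n t => tele_coef x n * (damp x t * u_exp t ^ n))).
      intros n; apply smooth_scal, Sdu.
    + apply smooth_scal, Sdu.
  - apply functional_extensionality; intros t; symmetry; apply is_derive_unique.
    assert (H := is_derive_damp_log_partial x (S m) t).
    rewrite tech5 in H; unfold a.
    replace (_ + _) with (sum_f_R0 (fun n => tele_coef x n * (damp x t * u_exp t ^ n)) m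
       + tele_coef x (S m) * (damp x t * u_exp t ^ S m)
       - INR (S (S m)) / INR (S (S (S m))) * (damp x t * u_exp t ^ S m))
      by (unfold Rdiv; ring).
    exact H.
Qed.

Lemma sum_n_m_1_S (F : nat -> R) n : sum_n_m F 1 (S n) = sum_f_R0 (fun i => F (S i)) n.
Proof. now rewrite <- sum_n_m_S, <- sum_n_Reals. Qed.

Lemma C_S_mult_S n i : (i <= n)%nat ->
  Binomial.C (S n) (S i) * INR (S i) = INR (S n) * Binomial.C n i.
Proof.
  intros Hi; unfold Binomial.C; replace (S n - S i)%nat with (n - i)%nat by lia.
  change (Factorial.fact (S n)) with (S n * Factorial.fact n)%nat.
  change (Factorial.fact (S i)) with (S i * Factorial.fact i)%nat.
  assert (Hi' := INR_fact_neq_0 i); assert (Hni := INR_fact_neq_0 (n - i)).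
  assert (HSi : INR (S i) <> 0) by (apply not_0_INR; lia).
  rewrite !mult_INR; field; auto.
Qed.

Lemma bern_Delta_S n x m : bern_Delta (S n) x (S m) =
  - INR (S n) * sum_f_R0 (fun i => Binomial.C n i * (-1) ^ i * (x + INR i) ^ m) n.
Proof.
  unfold bern_Delta; rewrite sum_n_m_1_S, scal_sum; apply sum_eq; intros i Hi.
  replace (S m - 1)%nat with m by lia.
  replace (INR (S i) + x - 1) with (x + INR i) by (rewrite S_INR; ring).
  transitivity ((-1) * (-1) ^ i * (Binomial.C (S n) (S i) * INR (S i)) * (x + INR i) ^ m);
    [simpl; ring | rewrite C_S_mult_S; [ring | exact Hi]].
Qed.

Theorem mainTheorem3 (x : R) (hx0 : 0 < x) (hx1 : x <= 1) (k : nat) (hk : (1 <= k)%nat) :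
  bernoulli_poly k (1 - x) =
  (-1) ^ (k + 1) *
  sum_n_m (fun n => (1 / (INR n * (INR n + 1)) + (x - 1) / (INR n ^ 2)) * bern_Delta n x k) 1 k.
Proof.
  destruct k as [|m]; [lia|].
  rewrite bernoulli_poly_S, sum_n_m_1_S, scal_sum; apply sum_eq; intros n _.
  rewrite Derive_n_damp_u_exp_pow, bern_Delta_S, pow_add, <- (tech_pow_Rmult (-1) m).
  unfold tele_coef; rewrite !S_INR.
  assert (0 <= INR n) by apply pos_INR.
  field; lra.
Qed.
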